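(* In the setting below with $P=\mathfrak A$ and the normalized error criterion, suppose $\{S_d\}$ is polynomially tractable with constants $C,p>0$, $q\ge0$. Then $\lambda\in\ell_\tau$ for all $\tau>p/2$; $\epsilon_d^{\rm init}$ tends to zero faster than the inverse of any polynomial as $d\to\infty$ (i.e. $\lambda_{d,\psi(1)}\mathcal P(d)\to0$ for every polynomial $\mathcal P$ positive on $\mathbb N$); $b_d\in O(\ln d)$; and hence $\lim_{d\to\infty}a_d/d=1$. If moreover $\{S_d\}$ is strongly polynomially tractable, then $b_d\in O(1)$.
   Context: Setting: $S_1:H_1\to G_1$ is a compact linear operator between real Hilbert spaces ($H_1$ infinite-dimensional separable); $\lambda=(\lambda_m)_{m\in\mathbb N}$, $\lambda_1\ge\lambda_2\ge\dots\ge0$, are the eigenvalues of $S_1^\dagger S_1$. $S_d=S_1^{\otimes d}:H_1^{\otimes d}\to G_1^{\otimes d}$. For each $d$ fix $\emptyset\ne I_d=\{i_1<\dots<i_{a_d}\}\subset\{1,\dots,d\}$ ($I_1=\{1\}$), put $a_d=\#I_d$, $b_d=d-a_d$, and fix one type $P\in\{\mathfrak S,\mathfrak A\}$ for all $d$; the problem $\{S_d\}$ is the family of restrictions of $S_d$ to the $I_d$-symmetric subspace (if $P=\mathfrak S$) or $I_d$-antisymmetric subspace (if $P=\mathfrak A$) of $H_1^{\otimes d}$, i.e. the range of $\frac1{a_d!}\sum_{\pi}(\pm1)U_\pi$, the sum over permutations $\pi$ of $\{1,\dots,d\}$ fixing all points outside $I_d$, $U_\pi(f_1\otimes\cdots\otimes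 f_d)=f_{\pi(1)}\otimes\cdots\otimes f_{\pi(d)}$, sign $(-1)^{|\pi|}$ used for $\mathfrak A$. Let $\nabla_d=\{k\in\mathbb N^d:k_{i_1}\le\dots\le k_{i_{a_d}}\}$ for $P=\mathfrak S$ and with strict inequalities for $P=\mathfrak A$; $\lambda_{d,k}=\prod_{l=1}^d\lambda_{k_l}$; $\psi:\mathbb N\to\nabla_d$ a bijection with $\lambda_{d,\psi(1)}\ge\lambda_{d,\psi(2)}\ge\cdots$. These are exactly the eigenvalues of $S_d^\dagger S_d$ on the subspace, and the information complexity is $n(\epsilon,d)=\#\{k\in\nabla_d:\lambda_{d,k}>\epsilon^2\}$, the initial error $\epsilon^{\rm init}_d=\sqrt{\lambda_{d,\psi(1)}}$ (equal to $\lambda_1^{d/2}$ if $P=\mathfrak S$, and $\sqrt{\lambda_1^{b_d}\lambda_1\lambda_2\cdots\lambda_{a_d}}$ if $P=\mathfrak A$). Normalized error criterion: polynomially tractable means $\exists C,p>0,q\ge0$ with $n(\epsilon'\epsilon_d^{\rm init},d)\le C(\epsilon')^{-p}d^q$ for all $d\in\mathbb N,\epsilon'\in(0,1]$; strongly polynomially tractable: this with $q=0$. Standing assumptions: $\lambda_2>0$ and $\epsilon_d^{\rm init}>0$ for all $d$. $\ell_\tau$: sequences with $\sum_m\lambda_m^\tau<\infty$. *)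

From Stdlib Require Import Reals Lra Lia List.
Import ListNotations.
Open Scope R_scope.

(* Eigenvalue sequence: lam 0 = lambda_1, lam 1 = lambda_2, ... (0-indexed).
   Index sets: I d i = true  iff  position i+1 (0 <= i < d) belongs to I_d.
   Multi-indices k in N^d: lists of length d of 0-indexed eigenvalue indices. *)

Definition a_card (I : nat -> nat -> bool) (d : nat) : nat :=
  length (filter (I d) (seq 0 d)).

Definition b_card (I : nat -> nat -> bool) (d : nat) : nat := (d - a_card I d)%nat.

Definition in_nabla_A (I : nat -> nat -> bool) (d : nat) (k : list nat) : Prop :=
  length k = d /\
  forall i j : nat, (i < j)%nat -> (j < d)%nat -> I d i = true -> I d j = true ->
    (nth i k 0 < nth j k 0)%nat.

Definition lam_prod (lam : nat -> R) (k : list nat) : R :=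
  fold_right (fun m acc => lam m * acc) 1 k.

(* (eps_d^init)^2 = lambda_{d,psi(1)} = lambda_1^{b_d} * lambda_1 * ... * lambda_{a_d}  (P = A) *)
Definition init_sq (lam : nat -> R) (I : nat -> nat -> bool) (d : nat) : R :=
  lam 0%nat ^ b_card I d * fold_right Rmult 1 (map lam (seq 0 (a_card I d))).

(* n(eps,d) <= N, where n(eps,d) = #{k in nabla_d : lambda_{d,k} > t}, t = eps^2:
   every duplicate-free finite list of such k has length <= N. *)
Definition info_le (lam : nat -> R) (I : nat -> nat -> bool) (d : nat) (t N : R) : Prop :=
  forall L : list (list nat), NoDup L ->
    (forall k, In k L -> in_nabla_A I d k /\ lam_prod lam k > t) ->
    INR (length L) <= N.

Definition poly_tractable_with (lam : nat -> R) (I : nat -> nat -> bool) (C p q : R) : Prop :=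
  forall (d : nat) (e : R), (1 <= d)%nat -> 0 < e <= 1 ->
    info_le lam I d (e ^ 2 * init_sq lam I d) (C * Rpower e (- p) * Rpower (INR d) q).

Definition strongly_poly_tractable (lam : nat -> R) (I : nat -> nat -> bool) : Prop :=
  exists C p : R, 0 < C /\ 0 < p /\ poly_tractable_with lam I C p 0.

Definition rpow0 (x tau : R) : R :=
  if Rlt_dec 0 x then Rpower x tau else 0.

Definition poly_eval (cs : list R) (x : R) : R :=
  fold_right (fun c acc => c + x * acc) 0 cs.

From Stdlib Require Import Reals Lra Lia List.
Import ListNotations.
Open Scope R_scope.

(* Every assertion comes from testing the tractability bound on explicit families of
   admissible multi-indices; [tractable_threshold] restates that bound at a relative
   threshold s = eps'^2.
   - At d = 1 the singletons [0], ..., [m] give lam m = O((m+1)^(-2/p)); comparison with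
     the p-series then gives lam in l_tau for every tau > p/2.
   - For general d the initial multi-index puts index 0 on the b_d unconstrained positions
     and 0, 1, ..., a_d - 1 on I_d ([fill], [pattern]).  Raising at most j unconstrained
     entries to index 1 gives, when m j <= b_d, at least m^j admissible multi-indices above
     the threshold (lam 1 / lam 0)^j / 2 ([bitvecs], [raised_family]); for m large this
     yields b_d <= c0 + c1 q ln d ([b_card_log_bound]).
   - The prefix products lam 0 ... lam (n-1) of a null sequence decay like e^(-n), so the
     initial eigenvalue is O(exp(O(ln d) - d)) and beats every polynomial; b_d = O(ln d)
     also gives b_d / d -> 0, and q = 0 makes the bound on b_d constant. *)

Lemma ln_le_mono x y : 0 < x -> x <= y -> ln x <= ln y.
Proof. intros Hx [Hxy|<-]; [left; apply ln_increasing|]; lra. Qed.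

Lemma exp_le_mono x y : x <= y -> exp x <= exp y.
Proof. intros [Hxy|<-]; [left; apply exp_increasing|]; lra. Qed.

Lemma ln_le_pred x : 0 < x -> ln x <= x - 1.
Proof. intros Hx. pose proof (exp_ineq1_le (ln x)) as Hexp. rewrite exp_ln in Hexp; lra. Qed.

Lemma ln_le_sqrt x : 0 < x -> ln x <= 2 * sqrt x.
Proof.
  intros Hx. pose proof (sqrt_lt_R0 x Hx) as Hs.
  rewrite <- (sqrt_sqrt x) at 1 by lra. rewrite ln_mult by lra.
  pose proof (ln_le_pred (sqrt x) Hs). lra.
Qed.

Lemma Rpower_pos x y : 0 < Rpower x y.
Proof. apply exp_pos. Qed.

Lemma Rpower_1_base y : Rpower 1 y = 1.
Proof. unfold Rpower. rewrite ln_1, Rmult_0_r. apply exp_0. Qed.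

Lemma Un_cv_squeeze (u v : nat -> R) (l : R) (N0 : nat) :
  (forall n, (N0 <= n)%nat -> Rabs (u n - l) <= v n) -> Un_cv v 0 -> Un_cv u l.
Proof.
  intros Huv Hv eps Heps. destruct (Hv eps Heps) as [N HN].
  exists (N + N0)%nat. intros n Hn.
  specialize (HN n ltac:(lia)). specialize (Huv n ltac:(lia)).
  unfold Rdist in *. rewrite Rminus_0_r in HN. pose proof (Rle_abs (v n)). lra.
Qed.

Lemma lam_antitone (lam : nat -> R) (lam_noninc : forall m, lam (S m) <= lam m) i m :
  (i <= m)%nat -> lam m <= lam i.
Proof. induction 1; [lra|]. specialize (lam_noninc m). lra. Qed.

Lemma tractable_threshold (lam : nat -> R) (I : nat -> nat -> bool) (C p q : R)
  (HPT : poly_tractable_with lam I C p q) (d : nat) (s : R) (L : list (list nat)) :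
  (1 <= d)%nat -> 0 < s <= 1 -> NoDup L ->
  (forall k, In k L -> in_nabla_A I d k /\ lam_prod lam k > s * init_sq lam I d) ->
  INR (length L) <= C * Rpower s (- (p / 2)) * Rpower (INR d) q.
Proof.
  intros Hd Hs HL Hk.
  assert (He2 : sqrt s ^ 2 = s) by (simpl; rewrite Rmult_1_r; apply sqrt_sqrt; lra).
  assert (He : 0 < sqrt s <= 1).
  { split; [apply sqrt_lt_R0; lra|]. rewrite <- sqrt_1. apply sqrt_le_1_alt; lra. }
  assert (Hpow : Rpower (sqrt s) (- p) = Rpower s (- (p / 2))).
  { rewrite <- Rpower_sqrt, Rpower_mult by lra. f_equal. field. }
  rewrite <- Hpow. apply (HPT d (sqrt s) Hd He L HL). now rewrite He2.
Qed.

Lemma init_sq_1 (lam : nat -> R) (I : nat -> nat -> bool) :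
  I 1%nat 0%nat = true -> init_sq lam I 1 = lam 0%nat.
Proof. intros I1. unfold init_sq, b_card, a_card. simpl. rewrite I1. simpl. ring. Qed.

(** Decay of the univariate eigenvalues, read off at [d = 1]: the singletons
    [[0]; ...; [m]] all lie above the threshold [lam m / 2], so
    [m + 1 <= C (lam m / (2 lam 0))^(-p/2)], i.e. [lam m = O((m+1)^(-2/p))]. *)
Lemma eigenvalue_decay (lam : nat -> R) (I : nat -> nat -> bool) (C p q : R)
  (lam_nonneg : forall m, 0 <= lam m) (lam_noninc : forall m, lam (S m) <= lam m)
  (lam1_pos : 0 < lam 0%nat) (I1 : I 1%nat 0%nat = true) (HC : 0 < C) (Hp : 0 < p)
  (HPT : poly_tractable_with lam I C p q) (m : nat) :
  lam m <= 2 * lam 0%nat * Rpower C (2 / p) * Rpower (INR (S m)) (- (2 / p)).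
Proof.
  pose proof (Rpower_pos C (2 / p)). pose proof (Rpower_pos (INR (S m)) (- (2 / p))).
  destruct (lam_nonneg m) as [Hm|<-]; [|apply Rmult_le_pos; [|lra]; apply Rmult_le_pos; lra].
  assert (Hm0 : lam m <= lam 0%nat) by (apply lam_antitone; auto; lia).
  set (s := lam m / (2 * lam 0%nat)).
  assert (Hs : 0 < s <= 1).
  { unfold s. split; [apply Rdiv_lt_0_compat; lra|]. apply Rmult_le_reg_r with (2 * lam 0%nat); [lra|].
    field_simplify; lra. }
  assert (Hcount : INR (S m) <= C * Rpower s (- (p / 2)) * Rpower (INR 1) q).
  { replace (INR (S m)) with (INR (length (map (fun i => [i]) (seq 0 (S m)))))
      by (now rewrite length_map, length_seq).
    apply (tractable_threshold lam I C p q HPT); auto.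
    - apply NoDup_map_NoDup_ForallPairs; [|apply seq_NoDup].
      intros x y _ _ Hxy; injection Hxy; auto.
    - intros k Hk. apply in_map_iff in Hk. destruct Hk as [i [<- Hi]]. apply in_seq in Hi.
      split; [split; [reflexivity|intros; lia]|].
      assert (lam m <= lam i) by (apply lam_antitone; auto; lia).
      rewrite init_sq_1 by auto. simpl lam_prod. unfold s. field_simplify; lra. }
  rewrite Rpower_1_base, Rmult_1_r in Hcount.
  apply ln_le_mono in Hcount; [|apply lt_0_INR; lia].
  rewrite ln_mult, ln_Rpower in Hcount by (auto using Rpower_pos).
  assert (Hln : ln s <= 2 / p * ln C + - (2 / p) * ln (INR (S m))).
  { apply Rmult_le_reg_l with (p / 2); [lra|].
    replace (p / 2 * (2 / p * ln C + - (2 / p) * ln (INR (S m))))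
      with (ln C - ln (INR (S m))) by (field; lra). lra. }
  apply exp_le_mono in Hln. rewrite exp_plus, exp_ln in Hln by (unfold s; apply Rdiv_lt_0_compat; lra).
  replace (lam m) with (2 * lam 0%nat * s) by (unfold s; field; lra).
  unfold Rpower. nra.
Qed.

Lemma rpower_telescope (s x : R) : 1 < s -> 1 <= x ->
  Rpower (x + 1) (- s) <= (Rpower x (1 - s) - Rpower (x + 1) (1 - s)) / (s - 1).
Proof.
  intros Hs Hx. set (y := x + 1).
  (* ln y - ln x >= 1/y, from ln (x/y) <= x/y - 1 *)
  assert (Hgap : 1 / y <= ln y - ln x).
  { pose proof (ln_le_pred (x / y) ltac:(unfold y; apply Rdiv_lt_0_compat; lra)) as Hln.
    unfold Rdiv in Hln. rewrite ln_mult, ln_Rinv in Hln by (unfold y; try apply Rinv_0_lt_compat; lra).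
    replace (x * / y) with (1 - 1 / y) in Hln by (unfold y; field; lra). lra. }
  assert (Ey : Rpower y (- s) = Rpower y (1 - s) * (1 / y)).
  { replace (- s) with ((1 - s) + Ropp 1) by ring.
    rewrite Rpower_plus, Rpower_Ropp, Rpower_1 by (unfold y; lra). unfold Rdiv; ring. }
  assert (Ex : Rpower x (1 - s) = Rpower y (1 - s) * exp ((s - 1) * (ln y - ln x))).
  { unfold Rpower. rewrite <- exp_plus. f_equal. ring. }
  apply Rmult_le_reg_r with (s - 1); [lra|].
  unfold Rdiv. rewrite Rmult_assoc, Rinv_l, Rmult_1_r, Ey, Ex by lra.
  pose proof (exp_ineq1_le ((s - 1) * (ln y - ln x))). pose proof (Rpower_pos y (1 - s)).
  assert ((s - 1) * (1 / y) <= (s - 1) * (ln y - ln x)) by (apply Rmult_le_compat_l; lra).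
  nra.
Qed.

Lemma pseries_partial_sum (s : R) (N : nat) : 1 < s ->
  sum_f_R0 (fun m => Rpower (INR (S m)) (- s)) N
  <= 1 + (1 - Rpower (INR (S N)) (1 - s)) / (s - 1).
Proof.
  intros Hs. induction N as [|N IH].
  - simpl. rewrite !Rpower_1_base. unfold Rdiv. lra.
  - rewrite tech5.
    pose proof (rpower_telescope s (INR (S N)) Hs ltac:(apply (le_INR 1); lia)) as Hstep.
    rewrite <- S_INR in Hstep. unfold Rdiv in *. lra.
Qed.

Lemma summable_of_pseries_bound (f : nat -> R) (K s : R) : 1 < s ->
  (forall m, 0 <= f m <= K * Rpower (INR (S m)) (- s)) -> exists l, infinite_sum f l.
Proof.
  intros Hs Hf.
  destruct (growing_cv (fun N => sum_f_R0 f N)) as [l Hl].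
  - intro n. rewrite tech5. pose proof (Hf (S n)). lra.
  - exists (K * (1 + 1 / (s - 1))). intros x [N ->].
    eapply Rle_trans; [apply sum_Rle; intros n _; apply Hf|].
    rewrite (sum_eq _ (fun m => Rpower (INR (S m)) (- s) * K)) by (intros; ring).
    rewrite <- scal_sum.
    assert (HK : 0 <= K) by (pose proof (Hf 0%nat); pose proof (Rpower_pos (INR 1) (- s)); nra).
    apply Rmult_le_compat_l; auto.
    pose proof (pseries_partial_sum s N Hs). pose proof (Rpower_pos (INR (S N)) (1 - s)).
    unfold Rdiv in *. assert (0 < / (s - 1)) by (apply Rinv_0_lt_compat; lra). nra.
  - exists l. exact Hl.
Qed.

Lemma rpow0_nonneg (x tau : R) : 0 <= rpow0 x tau.
Proof. unfold rpow0. destruct (Rlt_dec 0 x); [left; apply Rpower_pos|lra]. Qed.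

(** First assertion: [lam] lies in [l_tau] for every [tau > p/2], since
    [lam m ^ tau = O((m+1)^(-2 tau/p))] and [2 tau / p > 1]. *)
Lemma eigenvalues_summable (lam : nat -> R) (I : nat -> nat -> bool) (C p q : R)
  (lam_nonneg : forall m, 0 <= lam m) (lam_noninc : forall m, lam (S m) <= lam m)
  (lam1_pos : 0 < lam 0%nat) (I1 : I 1%nat 0%nat = true) (HC : 0 < C) (Hp : 0 < p)
  (HPT : poly_tractable_with lam I C p q) (tau : R) :
  p / 2 < tau -> exists l, infinite_sum (fun m => rpow0 (lam m) tau) l.
Proof.
  intros Htau. set (A := 2 * lam 0%nat * Rpower C (2 / p)).
  assert (HA : 0 < A) by (unfold A; pose proof (Rpower_pos C (2 / p)); nra).
  apply (summable_of_pseries_bound _ (Rpower A tau) (2 / p * tau)).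
  { apply Rmult_lt_reg_r with (p / 2); [lra|]. field_simplify; lra. }
  intro m. split; [apply rpow0_nonneg|]. unfold rpow0.
  destruct (Rlt_dec 0 (lam m)) as [Hm|Hm]; [|left; apply Rmult_lt_0_compat; apply Rpower_pos].
  pose proof (eigenvalue_decay lam I C p q lam_nonneg lam_noninc lam1_pos I1 HC Hp HPT m) as Hd.
  fold A in Hd.
  replace (- (2 / p * tau)) with (- (2 / p) * tau) by ring.
  rewrite <- Rpower_mult, Rpower_mult_distr by (auto using Rpower_pos).
  apply Rle_Rpower_l; lra.
Qed.

(** Boolean patterns describe the constrained positions of a multi-index: a position is
    marked when it belongs to [I_d].  [marked js] and [unmarked js] count both kinds. *)
Definition marked (js : list bool) : nat := length (filter (fun b => b) js).
Definition unmarked (js : list bool) : nat := length (filter negb js).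

Definition pattern (I : nat -> nat -> bool) (d : nat) : list bool := map (I d) (seq 0 d).

Lemma pattern_counts (I : nat -> nat -> bool) (d : nat) :
  marked (pattern I d) = a_card I d /\ unmarked (pattern I d) = b_card I d.
Proof.
  unfold marked, unmarked, pattern, b_card, a_card. rewrite !filter_map_swap, !length_map.
  pose proof (filter_length (I d) (seq 0 d)) as Hlen. rewrite length_seq in Hlen.
  split; [reflexivity|lia].
Qed.

Lemma pattern_nth (I : nat -> nat -> bool) (d i : nat) :
  (i < d)%nat -> nth i (pattern I d) false = I d i.
Proof.
  intros Hi. unfold pattern. rewrite (nth_indep _ false (I d 0%nat)) by (rewrite length_map, length_seq; lia).
  rewrite map_nth, seq_nth by lia. reflexivity.
Qed.

(** With [v = nil] and [r = 0] it is the multi-index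
    realising the initial error; raising unmarked entries to 1 gives many competitors. *)
Fixpoint fill (js : list bool) (r : nat) (v : list nat) : list nat :=
  match js with
  | [] => []
  | true :: js' => r :: fill js' (S r) v
  | false :: js' => hd 0%nat v :: fill js' r (tl v)
  end.

Lemma length_fill (js : list bool) : forall r v, length (fill js r v) = length js.
Proof. induction js as [|[] js IH]; intros; simpl; auto. Qed.

Lemma fill_marked_ge (js : list bool) : forall r v a,
  nth a js false = true -> (r <= nth a (fill js r v) 0)%nat.
Proof.
  induction js as [|[] js IH]; intros r v [|a] Ha; simpl in *; try discriminate; auto.
  specialize (IH (S r) v a Ha). lia.
Qed.

Lemma fill_marked_increasing (js : list bool) : forall r v a b, (a < b)%nat ->
  nth a js false = true -> nth b js false = true ->
  (nth a (fill js r v) 0 < nth b (fill js r v) 0)%nat.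
Proof.
  induction js as [|j js IH]; intros r v a b Hab Ha Hb; [destruct b; discriminate|].
  destruct b as [|b]; [lia|]. destruct a as [|a].
  - simpl in Ha. subst j. simpl. pose proof (fill_marked_ge js (S r) v b Hb). lia.
  - destruct j; simpl; apply IH; auto; lia.
Qed.

Lemma fill_inj (js : list bool) : forall r v w,
  length v = unmarked js -> length w = unmarked js -> fill js r v = fill js r w -> v = w.
Proof.
  unfold unmarked. induction js as [|[] js IH]; intros r v w Hv Hw Heq; simpl in *.
  - now destruct v, w.
  - injection Heq. apply IH; auto.
  - destruct v as [|x v], w as [|y w]; simpl in *; try discriminate.
    injection Heq as -> Heq. f_equal. eapply IH; eauto.
Qed.

Definition lead_prod (lam : nat -> R) (r : nat) : R := fold_right Rmult 1 (map lam (seq 0 r)).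

Lemma lead_prod_S (lam : nat -> R) (r : nat) : lead_prod lam (S r) = lead_prod lam r * lam r.
Proof.
  unfold lead_prod. rewrite seq_S, map_app, fold_right_app. simpl.
  generalize (map lam (seq 0 r)). intro l. induction l as [|x l IH]; simpl; [ring|].
  rewrite IH. ring.
Qed.

Lemma lead_prod_nonneg (lam : nat -> R) (lam_nonneg : forall m, 0 <= lam m) (r : nat) :
  0 <= lead_prod lam r.
Proof.
  induction r; [unfold lead_prod; simpl; lra|].
  rewrite lead_prod_S. apply Rmult_le_pos; auto.
Qed.

Lemma lam_prod_nonneg (lam : nat -> R) (lam_nonneg : forall m, 0 <= lam m) (k : list nat) :
  0 <= lam_prod lam k.
Proof. induction k; simpl; [lra|]. apply Rmult_le_pos; auto. Qed.

Lemma fill_nil_prod (lam : nat -> R) (js : list bool) : forall r,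
  lead_prod lam r * lam_prod lam (fill js r nil)
  = lam 0%nat ^ unmarked js * lead_prod lam (r + marked js).
Proof.
  unfold unmarked, marked. induction js as [|[] js IH]; intros r; simpl.
  - rewrite Nat.add_0_r. ring.
  - rewrite <- Rmult_assoc, <- lead_prod_S, IH. do 2 f_equal. lia.
  - replace (lead_prod lam r * (lam 0%nat * lam_prod lam (fill js r [])))
      with (lam 0%nat * (lead_prod lam r * lam_prod lam (fill js r []))) by ring.
    rewrite IH. ring.
Qed.

Lemma fill_init (lam : nat -> R) (I : nat -> nat -> bool) (d : nat) :
  lam_prod lam (fill (pattern I d) 0 nil) = init_sq lam I d.
Proof.
  pose proof (fill_nil_prod lam (pattern I d) 0) as H.
  destruct (pattern_counts I d) as [Ha Hb]. rewrite Ha, Hb in H.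
  unfold lead_prod at 1 in H. simpl in H. rewrite Rmult_1_l in H. exact H.
Qed.

Lemma fill_raise_prod (lam : nat -> R) (lam_nonneg : forall m, 0 <= lam m)
  (lam21 : lam 1%nat <= lam 0%nat) (js : list bool) : forall r v,
  Forall (fun x => x <= 1)%nat v ->
  lam 1%nat ^ list_sum v * lam_prod lam (fill js r nil)
  <= lam 0%nat ^ list_sum v * lam_prod lam (fill js r v).
Proof.
  pose proof (lam_nonneg 0%nat) as Hlam0. pose proof (lam_nonneg 1%nat) as Hlam1.
  induction js as [|[] js IH]; intros r v Hv; simpl.
  - rewrite !Rmult_1_r. apply pow_incr. lra.
  - pose proof (IH (S r) v Hv). pose proof (lam_nonneg r).
    replace (lam 1%nat ^ list_sum v * (lam r * lam_prod lam (fill js (S r) [])))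
      with (lam r * (lam 1%nat ^ list_sum v * lam_prod lam (fill js (S r) []))) by ring.
    replace (lam 0%nat ^ list_sum v * (lam r * lam_prod lam (fill js (S r) v)))
      with (lam r * (lam 0%nat ^ list_sum v * lam_prod lam (fill js (S r) v))) by ring.
    apply Rmult_le_compat_l; auto.
  - destruct v as [|x v]; simpl; [lra|].
    inversion Hv as [|? ? Hx Hv']; subst. pose proof (IH r v Hv') as IHv.
    pose proof (lam_prod_nonneg lam lam_nonneg (fill js r [])).
    pose proof (pow_le (lam 1%nat) (list_sum v) Hlam1).
    destruct x as [|[|x]]; [| |lia]; simpl.
    + nra.
    + replace (lam 1%nat * lam 1%nat ^ list_sum v * (lam 0%nat * lam_prod lam (fill js r [])))
        with ((lam 0%nat * lam 1%nat) * (lam 1%nat ^ list_sum v * lam_prod lam (fill js r []))) by ring.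
      replace (lam 0%nat * lam 0%nat ^ list_sum v * (lam 1%nat * lam_prod lam (fill js r v)))
        with ((lam 0%nat * lam 1%nat) * (lam 0%nat ^ list_sum v * lam_prod lam (fill js r v))) by ring.
      apply Rmult_le_compat_l; [nra|auto].
Qed.

Fixpoint bitvecs (b j : nat) : list (list nat) :=
  match b with
  | O => [[]]
  | S b' => map (cons 0%nat) (bitvecs b' j) ++
            match j with O => [] | S j' => map (cons 1%nat) (bitvecs b' j') end
  end.

Lemma bitvecs_spec (b : nat) : forall j v, In v (bitvecs b j) ->
  length v = b /\ Forall (fun x => x <= 1)%nat v /\ (list_sum v <= j)%nat.
Proof.
  induction b as [|b IH]; intros j v Hv; simpl in Hv.
  - destruct Hv as [<-|[]]. simpl. repeat split; auto. lia.
  - apply in_app_or in Hv. destruct Hv as [Hv|Hv].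
    + apply in_map_iff in Hv. destruct Hv as [u [<- Hu]].
      destruct (IH j u Hu) as (? & ? & ?). simpl. auto.
    + destruct j as [|j]; [destruct Hv|]. apply in_map_iff in Hv. destruct Hv as [u [<- Hu]].
      destruct (IH j u Hu) as (? & ? & ?). simpl. repeat split; auto. lia.
Qed.

Lemma bitvecs_NoDup (b : nat) : forall j, NoDup (bitvecs b j).
Proof.
  assert (Hcons : forall x : nat, forall l : list (list nat), NoDup l -> NoDup (map (cons x) l)).
  { intros x l Hl. apply NoDup_map_NoDup_ForallPairs; auto. intros u w _ _ H; injection H; auto. }
  induction b as [|b IH]; intros j; simpl; [repeat constructor; simpl; tauto|].
  apply NoDup_app; [auto|destruct j; [constructor|auto]|].
  intros v Hv0 Hv1. destruct j; [destruct Hv1|].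
  apply in_map_iff in Hv0, Hv1. destruct Hv0 as [u [<- _]], Hv1 as [w [Hw _]]. discriminate.
Qed.

Lemma bitvecs_length_S (b j : nat) :
  length (bitvecs (S b) j)
  = (length (bitvecs b j) + match j with O => 0 | S j' => length (bitvecs b j') end)%nat.
Proof. simpl. rewrite length_app, length_map. destruct j; simpl; rewrite ?length_map; lia. Qed.

Lemma bitvecs_length_mono (b b' j : nat) :
  (b <= b')%nat -> (length (bitvecs b j) <= length (bitvecs b' j))%nat.
Proof. induction 1; auto. rewrite bitvecs_length_S. lia. Qed.

(** Counting: if [m j <= b] there are at least [m^j] bit vectors of length [b] with at
    most [j] ones (put one 1 into each of [j] disjoint blocks of length [m]). *)
Lemma bitvecs_count (m j : nat) : forall b, (m * j <= b)%nat -> (m ^ j <= length (bitvecs b j))%nat.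
Proof.
  induction j as [|j IH]; intros b Hb.
  - pose proof (bitvecs_length_mono 0 b 0 ltac:(lia)). simpl in *. lia.
  - assert (Hstep : forall i, (i * length (bitvecs (b - m) j) <= length (bitvecs (i + (b - m)) (S j)))%nat).
    { induction i; [simpl; lia|]. rewrite Nat.add_succ_l, bitvecs_length_S.
      pose proof (bitvecs_length_mono (b - m) (i + (b - m)) j ltac:(lia)). lia. }
    pose proof (IH (b - m)%nat ltac:(lia)). pose proof (Hstep m).
    replace (m + (b - m))%nat with b in * by lia. simpl. nia.
Qed.

Lemma pow_raise_le (a b X Y : R) (s j : nat) : 0 <= a <= b -> 0 <= X -> (s <= j)%nat ->
  a ^ s * Y <= b ^ s * X -> a ^ j * Y <= b ^ j * X.
Proof.
  intros Hab HX Hsj Hs. replace j with (s + (j - s))%nat by lia. rewrite !pow_add.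
  pose proof (pow_incr a b (j - s) Hab). pose proof (pow_le a (j - s) (proj1 Hab)).
  pose proof (pow_le b s (Rle_trans _ _ _ (proj1 Hab) (proj2 Hab))).
  apply Rle_trans with (a ^ (j - s) * (b ^ s * X)).
  - replace (a ^ s * a ^ (j - s) * Y) with (a ^ (j - s) * (a ^ s * Y)) by ring.
    apply Rmult_le_compat_l; auto.
  - replace (b ^ s * b ^ (j - s) * X) with (b ^ (j - s) * (b ^ s * X)) by ring.
    apply Rmult_le_compat_r; nra.
Qed.

Lemma raised_family (lam : nat -> R) (I : nat -> nat -> bool) (d m j : nat)
  (lam_nonneg : forall m, 0 <= lam m) (lam21 : lam 1%nat <= lam 0%nat) :
  (m * j <= b_card I d)%nat ->
  exists L, NoDup L /\ (m ^ j <= length L)%nat /\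
    forall k, In k L -> in_nabla_A I d k /\
      lam 1%nat ^ j * init_sq lam I d <= lam 0%nat ^ j * lam_prod lam k.
Proof.
  intros Hmj. destruct (pattern_counts I d) as [_ Hb].
  exists (map (fill (pattern I d) 0) (bitvecs (b_card I d) j)). split; [|split].
  - apply NoDup_map_NoDup_ForallPairs; [|apply bitvecs_NoDup].
    intros v w Hv Hw. apply bitvecs_spec in Hv, Hw.
    apply fill_inj; rewrite Hb; tauto.
  - rewrite length_map. now apply bitvecs_count.
  - intros k Hk. apply in_map_iff in Hk. destruct Hk as [v [<- Hv]].
    apply bitvecs_spec in Hv. destruct Hv as (_ & Hv01 & Hsum). split.
    + split; [now unfold pattern; rewrite length_fill, length_map, length_seq|].
      intros a b Hab Hbd Ha Hb'. rewrite <- pattern_nth in Ha, Hb' by lia.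
      now apply fill_marked_increasing.
    + apply (pow_raise_le _ _ _ _ (list_sum v)); auto using lam_prod_nonneg.
      rewrite <- fill_init. now apply fill_raise_prod.
Qed.

(** Tractability applied to the raised family at threshold [s = r^j / 2], where
    [r = lam 1 / lam 0]: [m^j <= C s^(-p/2) d^q], i.e. in logarithms
    [j (ln m + (p/2) ln r) <= ln C + (p/2) ln 2 + q ln d]. *)
Lemma raised_count_bound (lam : nat -> R) (I : nat -> nat -> bool) (C p q : R)
  (lam_nonneg : forall m, 0 <= lam m) (lam2_pos : 0 < lam 1%nat)
  (lam21 : lam 1%nat <= lam 0%nat)
  (init_pos : forall d, (1 <= d)%nat -> 0 < init_sq lam I d) (HC : 0 < C)
  (HPT : poly_tractable_with lam I C p q) (d m j : nat) :
  (1 <= d)%nat -> (1 <= m)%nat -> (m * j <= b_card I d)%nat ->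
  INR j * (ln (INR m) + p / 2 * ln (lam 1%nat / lam 0%nat))
  <= ln C + p / 2 * ln 2 + q * ln (INR d).
Proof.
  intros Hd Hm Hmj.
  set (r := lam 1%nat / lam 0%nat).
  assert (Hr : 0 < r <= 1).
  { unfold r. split; [apply Rdiv_lt_0_compat; lra|].
    apply Rmult_le_reg_r with (lam 0%nat); [lra|]. field_simplify; lra. }
  set (s := r ^ j / 2).
  assert (Hs : 0 < s <= 1).
  { unfold s. pose proof (pow_lt r j ltac:(lra)). rewrite <- (pow1 j).
    pose proof (pow_incr r 1 j ltac:(lra)). lra. }
  pose proof (init_pos d Hd) as Hinit.
  destruct (raised_family lam I d m j lam_nonneg lam21 Hmj) as (L & HL & Hlen & Hk).
  assert (Hcount : INR (m ^ j) <= C * Rpower s (- (p / 2)) * Rpower (INR d) q).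
  { apply Rle_trans with (INR (length L)); [now apply le_INR|].
    apply (tractable_threshold lam I C p q HPT); auto.
    intros k Hk'. destruct (Hk k Hk') as [Hnabla Hprod]. split; auto.
    assert (Hj0 : 0 < lam 0%nat ^ j) by (apply pow_lt; lra).
    apply Rmult_lt_reg_l with (lam 0%nat ^ j); auto.
    replace (lam 0%nat ^ j * (s * init_sq lam I d)) with (lam 1%nat ^ j * init_sq lam I d / 2).
    - pose proof (pow_lt (lam 1%nat) j lam2_pos). nra.
    - unfold s, r, Rdiv. rewrite Rpow_mult_distr, pow_inv. field. apply pow_nonzero. lra. }
  rewrite pow_INR in Hcount. apply ln_le_mono in Hcount; [|apply pow_lt, lt_0_INR; lia].
  assert (Hlns : ln s = INR j * ln r - ln 2).
  { unfold s, Rdiv. rewrite ln_mult, ln_pow, ln_Rinv; try lra. apply pow_lt; lra. }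
  assert (Hd0 : 0 < INR d) by (apply lt_0_INR; lia).
  pose proof (Rpower_pos s (- (p / 2))). pose proof (Rpower_pos (INR d) q).
  rewrite ln_pow, !ln_mult, !ln_Rpower, Hlns in Hcount
    by (try apply Rmult_lt_0_compat; try apply lt_0_INR; auto; lia).
  fold r. nra.
Qed.

(** Pick [m] with [ln m + (p/2) ln r >= ln 2]
    ([r = lam 1 / lam 0]) and put [j = b_d / m]; the raised-family bound then yields
    [j ln 2 <= ln C + (p/2) ln 2 + q ln d], while [b_d < m (j + 1)]. *)
Lemma b_card_log_bound (lam : nat -> R) (I : nat -> nat -> bool) (C p q : R)
  (lam_nonneg : forall m, 0 <= lam m) (lam2_pos : 0 < lam 1%nat)
  (lam21 : lam 1%nat <= lam 0%nat)
  (init_pos : forall d, (1 <= d)%nat -> 0 < init_sq lam I d) (HC : 0 < C)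
  (HPT : poly_tractable_with lam I C p q) :
  exists c0 c1, 0 <= c1 /\
    forall d, (1 <= d)%nat -> INR (b_card I d) <= c0 + c1 * q * ln (INR d).
Proof.
  set (r := lam 1%nat / lam 0%nat).
  assert (Hr : 0 < r) by (unfold r; apply Rdiv_lt_0_compat; lra).
  pose proof (Rpower_pos r (- (p / 2))) as Hrp.
  destruct (INR_archimed 1 (2 * Rpower r (- (p / 2)))) as [m Hm]; [lra|].
  rewrite Rmult_1_r in Hm.
  assert (Hm1 : (1 <= m)%nat) by (destruct m; [simpl in Hm; lra|lia]).
  assert (Hlnm : ln 2 <= ln (INR m) + p / 2 * ln r).
  { assert (Hln : ln (2 * Rpower r (- (p / 2))) <= ln (INR m)) by (apply ln_le_mono; lra).
    rewrite ln_mult, ln_Rpower in Hln by lra. lra. }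
  pose proof ln_lt_2 as Hln2.
  set (K0 := ln C + p / 2 * ln 2).
  exists (INR m + INR m / ln 2 * K0), (INR m / ln 2).
  assert (Hm0 : 0 < INR m) by (apply lt_0_INR; lia).
  split; [left; apply Rdiv_lt_0_compat; lra|].
  intros d Hd. set (b := b_card I d). set (j := (b / m)%nat).
  assert (Hj : (m * j <= b)%nat) by (unfold j; pose proof (Nat.div_mod_eq b m); lia).
  assert (Hb : (b < m * (j + 1))%nat).
  { unfold j. pose proof (Nat.div_mod_eq b m). pose proof (Nat.mod_upper_bound b m ltac:(lia)). lia. }
  pose proof (raised_count_bound lam I C p q lam_nonneg lam2_pos lam21 init_pos HC HPT
                d m j Hd Hm1 Hj) as Hcount. fold r K0 in Hcount.
  assert (Hj2 : INR j * ln 2 <= K0 + q * ln (INR d)).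
  { pose proof (pos_INR j).
    assert (INR j * ln 2 <= INR j * (ln (INR m) + p / 2 * ln r)) by (apply Rmult_le_compat_l; lra).
    lra. }
  apply lt_INR in Hb. rewrite mult_INR, plus_INR in Hb. simpl in Hb.
  assert (Hjb : INR j <= (K0 + q * ln (INR d)) / ln 2).
  { apply Rmult_le_reg_r with (ln 2); [lra|].
    unfold Rdiv. rewrite Rmult_assoc, Rinv_l, Rmult_1_r; lra. }
  assert (INR m * INR j <= INR m * ((K0 + q * ln (INR d)) / ln 2)) by (apply Rmult_le_compat_l; lra).
  unfold Rdiv in *. nra.
Qed.

Lemma lead_prod_geometric (f : nat -> R) (B M : R) (J0 : nat)
  (f_nonneg : forall i, 0 <= f i) (f_le : forall i, f i <= M * B)
  (f_tail : forall i, (J0 <= i)%nat -> f i <= B) (HM : 1 <= M) (HB : 0 <= B) :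
  forall n, lead_prod f n <= M ^ J0 * B ^ n.
Proof.
  assert (Hmin : forall n, lead_prod f n <= M ^ Nat.min n J0 * B ^ n).
  { induction n as [|n IH]; [unfold lead_prod; simpl; lra|].
    rewrite lead_prod_S. pose proof (lead_prod_nonneg f f_nonneg n). pose proof (f_nonneg n).
    pose proof (pow_le M (Nat.min n J0) ltac:(lra)). pose proof (pow_le B n HB).
    destruct (Nat.le_gt_cases J0 n) as [Hn|Hn].
    - replace (Nat.min (S n) J0) with (Nat.min n J0) by lia. simpl pow.
      apply Rle_trans with (M ^ Nat.min n J0 * B ^ n * f n); [apply Rmult_le_compat_r; auto|].
      specialize (f_tail n Hn). nra.
    - replace (Nat.min (S n) J0) with (S (Nat.min n J0)) by lia. simpl pow.
      apply Rle_trans with (M ^ Nat.min n J0 * B ^ n * f n); [apply Rmult_le_compat_r; auto|].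
      specialize (f_le n). nra. }
  intro n. eapply Rle_trans; [apply Hmin|]. apply Rmult_le_compat_r; [now apply pow_le|].
  apply Rle_pow; auto. lia.
Qed.

Lemma lead_prod_exp_decay (lam : nat -> R) (lam_nonneg : forall m, 0 <= lam m)
  (lam_noninc : forall m, lam (S m) <= lam m) (lam_to0 : Un_cv lam 0) :
  exists H, 0 < H /\ forall n, lead_prod lam n <= H * exp (- INR n).
Proof.
  destruct (lam_to0 (exp (-1)) (exp_pos (-1))) as [J0 HJ0].
  set (M := Rmax 1 (lam 0%nat) * exp 1).
  assert (HM : 1 <= M).
  { unfold M. pose proof (Rmax_l 1 (lam 0%nat)). pose proof (exp_ineq1_le 1). nra. }
  exists (M ^ J0). split; [apply pow_lt; lra|]. intro n.
  replace (exp (- INR n)) with (exp (-1) ^ n).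
  2:{ rewrite <- Rpower_pow by apply exp_pos. unfold Rpower. rewrite ln_exp. f_equal; ring. }
  apply lead_prod_geometric; auto; [| |left; apply exp_pos].
  - intro i. unfold M. rewrite Rmult_assoc, <- exp_plus, Rplus_opp_r, exp_0, Rmult_1_r.
    eapply Rle_trans; [apply (lam_antitone lam lam_noninc 0); lia|apply Rmax_r].
  - intros i Hi. specialize (HJ0 i Hi). unfold Rdist in HJ0.
    rewrite Rminus_0_r, Rabs_right in HJ0 by (apply Rle_ge; auto). lra.
Qed.

Lemma a_b_card (I : nat -> nat -> bool) (d : nat) : (a_card I d + b_card I d)%nat = d.
Proof.
  unfold b_card, a_card. pose proof (filter_length (I d) (seq 0 d)) as Hlen.
  rewrite length_seq in Hlen. lia.
Qed.

Lemma init_sq_exp_bound (lam : nat -> R) (I : nat -> nat -> bool) (H : R)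
  (lam_nonneg : forall m, 0 <= lam m) (HH : forall n, lead_prod lam n <= H * exp (- INR n))
  (d : nat) :
  init_sq lam I d <= H * exp (INR (b_card I d) * (ln (Rmax 1 (lam 0%nat)) + 1) - INR d).
Proof.
  set (L := Rmax 1 (lam 0%nat)). set (b := b_card I d).
  assert (Had : INR (a_card I d) = INR d - INR b).
  { rewrite <- (a_b_card I d) at 2. rewrite plus_INR. unfold b. lra. }
  assert (Hpow : lam 0%nat ^ b <= exp (INR b * ln L)).
  { assert (HL : 0 < L) by (unfold L; pose proof (Rmax_l 1 (lam 0%nat)); lra).
    rewrite <- ln_pow, exp_ln by (try apply pow_lt; exact HL).
    apply pow_incr. split; [auto|apply Rmax_r]. }
  pose proof (HH (a_card I d)) as Hlead. rewrite Had in Hlead.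
  pose proof (lead_prod_nonneg lam lam_nonneg (a_card I d)).
  apply Rle_trans with (exp (INR b * ln L) * (H * exp (- (INR d - INR b)))).
  - apply Rmult_le_compat; auto. apply pow_le; auto.
  - replace (INR b * (ln L + 1) - INR d) with (INR b * ln L + - (INR d - INR b)) by ring.
    rewrite exp_plus. lra.
Qed.

Definition coef_norm (cs : list R) : R := fold_right (fun c acc => Rabs c + acc) 0 cs.

Lemma coef_norm_nonneg (cs : list R) : 0 <= coef_norm cs.
Proof. induction cs as [|c cs IH]; simpl; [lra|]. pose proof (Rabs_pos c). lra. Qed.

Lemma poly_eval_abs_bound (cs : list R) (x : R) : 0 <= x ->
  Rabs (poly_eval cs x) <= coef_norm cs * (1 + x) ^ length cs.
Proof.
  intros Hx. induction cs as [|c cs IH]; simpl; [rewrite Rabs_R0; lra|].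
  eapply Rle_trans; [apply Rabs_triang|]. rewrite Rabs_mult, (Rabs_right x) by lra.
  pose proof (coef_norm_nonneg cs). pose proof (Rabs_pos c).
  set (P := (1 + x) ^ length cs).
  assert (HP : 1 <= P) by (apply pow_R1_Rle; lra). fold P in IH.
  assert (x * Rabs (poly_eval cs x) <= x * (coef_norm cs * P)) by (apply Rmult_le_compat_l; lra).
  assert (Rabs c * 1 <= Rabs c * ((1 + x) * P)) by (apply Rmult_le_compat_l; nra).
  assert (x * (coef_norm cs * P) <= coef_norm cs * ((1 + x) * P)) by nra.
  lra.
Qed.

Lemma poly_eval_exp_bound (cs : list R) (x : R) : 0 <= x ->
  poly_eval cs x <= coef_norm cs * exp (INR (length cs) * ln (1 + x)).
Proof.
  intros Hx. rewrite <- ln_pow, exp_ln by (try apply pow_lt; lra).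
  eapply Rle_trans; [apply Rle_abs|]. now apply poly_eval_abs_bound.
Qed.

(** [exp(A + c ln(1+d) - d) -> 0]: once [1 + d >= 16 c^2] we have
    [c ln(1+d) <= 2 c sqrt(1+d) <= (1+d)/2], so the exponent is below [A + 1/2 - d/2]. *)
Lemma exp_log_linear_cv (A c : R) : 0 <= c ->
  Un_cv (fun d => exp (A + c * ln (1 + INR d) - INR d)) 0.
Proof.
  intros Hc eps Heps.
  set (T := A + / 2 - ln eps).
  destruct (INR_archimed 1 (16 * c ^ 2 + 2 * Rabs T)) as [N HN]; [lra|].
  rewrite Rmult_1_r in HN. exists N. intros n Hn.
  assert (HnN : INR N <= INR n) by (apply le_INR; lia).
  pose proof (pos_INR n). pose proof (Rle_abs T). pose proof (Rabs_pos T).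
  pose proof (pow2_ge_0 c).
  set (x := 1 + INR n). set (y := sqrt x).
  assert (Hy2 : y * y = x) by (apply sqrt_sqrt; unfold x; lra).
  assert (Hy0 : 0 <= y) by apply sqrt_pos.
  assert (Hyc : 16 * c ^ 2 < y * y) by (rewrite Hy2; unfold x; lra).
  assert (Hy4 : 4 * c <= y) by (destruct (Rle_lt_dec (4 * c) y); [auto|nra]).
  assert (Hlog : c * ln x <= x / 2).
  { pose proof (ln_le_sqrt x ltac:(unfold x; lra)) as Hl. fold y in Hl.
    assert (c * ln x <= c * (2 * y)) by (apply Rmult_le_compat_l; auto). nra. }
  unfold Rdist. rewrite Rminus_0_r, Rabs_right by (left; apply exp_pos).
  rewrite <- (exp_ln eps) by lra. apply exp_increasing. fold x. unfold T, x in *. lra.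
Qed.

(** Second assertion: if [b_d <= c0 + K ln d] with [K >= 0], then the initial eigenvalue
    times any polynomial positive on the positive integers tends to 0.  By
    [init_sq_exp_bound] and [poly_eval_exp_bound] the product is at most
    [exp(A + c ln(1+d) - d)] for suitable constants. *)
Lemma init_superpoly_decay (lam : nat -> R) (I : nat -> nat -> bool) (c0 K : R) (HK : 0 <= K)
  (Hb : forall d, (1 <= d)%nat -> INR (b_card I d) <= c0 + K * ln (INR d))
  (lam_nonneg : forall m, 0 <= lam m) (lam_noninc : forall m, lam (S m) <= lam m)
  (lam_to0 : Un_cv lam 0) (init_pos : forall d, (1 <= d)%nat -> 0 < init_sq lam I d)
  (cs : list R) (Hcs : forall n : nat, (1 <= n)%nat -> 0 < poly_eval cs (INR n)) :
  Un_cv (fun d => init_sq lam I d * poly_eval cs (INR d)) 0.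
Proof.
  destruct (lead_prod_exp_decay lam lam_nonneg lam_noninc lam_to0) as [H [HH Hlead]].
  set (L := ln (Rmax 1 (lam 0%nat)) + 1).
  assert (HL : 1 <= L).
  { pose proof (ln_le_mono 1 _ Rlt_0_1 (Rmax_l 1 (lam 0%nat))) as Hln.
    rewrite ln_1 in Hln. unfold L. lra. }
  set (N := coef_norm cs). set (n := INR (length cs)).
  assert (HN : 0 <= N) by apply coef_norm_nonneg.
  assert (Hn : 0 <= n) by apply pos_INR.
  apply (Un_cv_squeeze _ (fun d => exp (ln (H * N + 1) + c0 * L + (K * L + n) * ln (1 + INR d) - INR d)) 0 1);
    [|apply exp_log_linear_cv; nra].
  intros d Hd. cbv beta. pose proof (init_pos d Hd). pose proof (Hcs d Hd).
  assert (Hd1 : 1 <= INR d) by (apply (le_INR 1); lia).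
  rewrite Rminus_0_r, Rabs_right by (apply Rle_ge, Rmult_le_pos; lra).
  pose proof (init_sq_exp_bound lam I H lam_nonneg Hlead d) as Hinit. fold L in Hinit.
  pose proof (poly_eval_exp_bound cs (INR d) (pos_INR d)) as Hpoly. fold N n in Hpoly.
  assert (Hexp : INR (b_card I d) * L - INR d + n * ln (1 + INR d)
                 <= c0 * L + (K * L + n) * ln (1 + INR d) - INR d).
  { pose proof (Hb d Hd). pose proof (ln_le_mono (INR d) (1 + INR d) ltac:(lra) ltac:(lra)).
    pose proof (ln_le_mono 1 (INR d) Rlt_0_1 Hd1). rewrite ln_1 in *.
    assert (INR (b_card I d) * L <= (c0 + K * ln (INR d)) * L) by (apply Rmult_le_compat_r; lra).
    assert (K * L * ln (INR d) <= K * L * ln (1 + INR d)) by (apply Rmult_le_compat_l; nra).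
    lra. }
  apply Rle_trans with ((H * N) * exp (INR (b_card I d) * L - INR d + n * ln (1 + INR d))).
  - rewrite exp_plus.
    replace (H * N * (exp (INR (b_card I d) * L - INR d) * exp (n * ln (1 + INR d))))
      with ((H * exp (INR (b_card I d) * L - INR d)) * (N * exp (n * ln (1 + INR d)))) by ring.
    apply Rmult_le_compat; lra.
  - set (E := c0 * L + (K * L + n) * ln (1 + INR d) - INR d).
    replace (ln (H * N + 1) + c0 * L + (K * L + n) * ln (1 + INR d) - INR d)
      with (ln (H * N + 1) + E) by (unfold E; ring).
    rewrite (exp_plus (ln _)), exp_ln by nra.
    pose proof (exp_le_mono _ _ Hexp) as HE. fold E in HE.
    apply Rmult_le_compat; [nra|left; apply exp_pos|lra|exact HE].
Qed.

(** [G / sqrt d -> 0]: beyond [d > (G / eps)^2] the quotient is below [eps]. *)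
Lemma inv_sqrt_cv (G : R) : 0 <= G -> Un_cv (fun d => G / sqrt (INR d)) 0.
Proof.
  intros HG eps Heps.
  destruct (INR_archimed 1 ((G / eps) ^ 2)) as [N HN]; [lra|]. rewrite Rmult_1_r in HN.
  exists (S N). intros d Hd.
  assert (HdN : INR N < INR d) by (apply lt_INR; lia).
  pose proof (pos_INR N).
  assert (Hs : 0 < sqrt (INR d)) by (apply sqrt_lt_R0; lra).
  assert (HGe : 0 <= G / eps) by (apply Rmult_le_pos; [|left; apply Rinv_0_lt_compat]; lra).
  assert (Hlt : G / eps < sqrt (INR d)).
  { rewrite <- (sqrt_pow2 (G / eps)) by exact HGe. apply sqrt_lt_1; [apply pow2_ge_0|lra|lra]. }
  unfold Rdist. rewrite Rminus_0_r, Rabs_right by (apply Rle_ge, Rmult_le_pos; [|left; apply Rinv_0_lt_compat]; lra).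
  apply Rmult_lt_reg_r with (sqrt (INR d)); auto.
  unfold Rdiv in *. rewrite Rmult_assoc, Rinv_l, Rmult_1_r by lra.
  apply Rmult_lt_compat_l with (r := eps) in Hlt; auto.
  rewrite <- Rmult_assoc, (Rmult_comm eps G), Rmult_assoc, Rinv_r, Rmult_1_r in Hlt; lra.
Qed.

(** Fourth assertion: [b_d <= c0 + K ln d] forces [a_d / d -> 1], since
    [|a_d/d - 1| = b_d / d <= (|c0| + 2K) / sqrt d]. *)
Lemma a_card_ratio_cv (I : nat -> nat -> bool) (c0 K : R) (HK : 0 <= K)
  (Hb : forall d, (1 <= d)%nat -> INR (b_card I d) <= c0 + K * ln (INR d)) :
  Un_cv (fun d => INR (a_card I d) / INR d) 1.
Proof.
  set (G := Rabs c0 + 2 * K).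
  apply (Un_cv_squeeze _ (fun d => G / sqrt (INR d)) 1 1);
    [|apply inv_sqrt_cv; unfold G; pose proof (Rabs_pos c0); lra].
  intros d Hd. cbv beta.
  assert (H1 : 1 <= INR d) by (apply (le_INR 1); lia).
  set (s := sqrt (INR d)).
  assert (Hs2 : s * s = INR d) by (apply sqrt_sqrt; lra).
  assert (Hs1 : 1 <= s) by (unfold s; rewrite <- sqrt_1; apply sqrt_le_1_alt; lra).
  assert (Hbs : INR (b_card I d) <= G * s).
  { pose proof (ln_le_sqrt (INR d) ltac:(lra)). pose proof (Hb d Hd).
    pose proof (Rle_abs c0). pose proof (Rabs_pos c0).
    assert (K * ln (INR d) <= K * (2 * s)) by (apply Rmult_le_compat_l; auto).
    unfold G. nra. }
  assert (Ha : INR (a_card I d) = INR d - INR (b_card I d)).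
  { rewrite <- (a_b_card I d) at 2. rewrite plus_INR. lra. }
  rewrite Ha. replace ((INR d - INR (b_card I d)) / INR d - 1) with (- (INR (b_card I d) / (s * s)))
    by (rewrite Hs2; field; lra).
  assert (Hss : 0 < s * s) by nra.
  rewrite Rabs_Ropp, Rabs_right
    by (apply Rle_ge, Rmult_le_pos; [apply pos_INR|left; apply Rinv_0_lt_compat; exact Hss]).
  unfold Rdiv. apply Rmult_le_reg_r with (s * s); auto.
  rewrite Rmult_assoc, Rinv_l, Rmult_1_r by lra.
  replace (G * / s * (s * s)) with (G * s) by (field; lra). exact Hbs.
Qed.

(** Third assertion: an affine-logarithmic bound is [O(ln d)], as [ln d >= 1] for [d >= 3]. *)
Lemma O_ln_of_affine_ln_bound (u : nat -> R) (c0 K : R) (HK : 0 <= K)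
  (Hu : forall d, (1 <= d)%nat -> u d <= c0 + K * ln (INR d)) :
  exists K' : R, exists d0 : nat, forall d, (d0 <= d)%nat -> u d <= K' * ln (INR d).
Proof.
  exists (Rabs c0 + K), 3%nat. intros d Hd.
  assert (H3 : 3 <= INR d) by (apply (le_INR 3) in Hd; simpl in Hd; lra).
  assert (Hln : 1 <= ln (INR d)).
  { rewrite <- (ln_exp 1). apply ln_le_mono; [apply exp_pos|]. pose proof exp_le_3. lra. }
  pose proof (Hu d ltac:(lia)). pose proof (Rle_abs c0). pose proof (Rabs_pos c0).
  assert (Rabs c0 * 1 <= Rabs c0 * ln (INR d)) by (apply Rmult_le_compat_l; lra).
  lra.
Qed.

Lemma b_card_bounded (lam : nat -> R) (I : nat -> nat -> bool)
  (lam_nonneg : forall m, 0 <= lam m) (lam2_pos : 0 < lam 1%nat)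
  (lam21 : lam 1%nat <= lam 0%nat)
  (init_pos : forall d, (1 <= d)%nat -> 0 < init_sq lam I d) :
  strongly_poly_tractable lam I -> exists K : nat, forall d, (b_card I d <= K)%nat.
Proof.
  intros (C & p & HC & _ & HPT).
  destruct (b_card_log_bound lam I C p 0 lam_nonneg lam2_pos lam21 init_pos HC HPT)
    as (c0 & c1 & _ & Hb).
  destruct (INR_archimed 1 c0) as [K HK]; [lra|]. rewrite Rmult_1_r in HK.
  exists K. intros [|d]; [unfold b_card; simpl; lia|].
  pose proof (Hb (S d) ltac:(lia)) as Hbd. rewrite Rmult_0_r, Rmult_0_l, Rplus_0_r in Hbd.
  apply INR_le. lra.
Qed.

Theorem proposition10 (lam : nat -> R) (I : nat -> nat -> bool) (C p q : R)
  (lam_nonneg : forall m, 0 <= lam m)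
  (lam_noninc : forall m, lam (S m) <= lam m)
  (lam_to0 : Un_cv lam 0)
  (lam2_pos : 0 < lam 1%nat)
  (I1 : I 1%nat 0%nat = true)
  (I_nonempty : forall d, (1 <= d)%nat -> exists i, (i < d)%nat /\ I d i = true)
  (init_pos : forall d, (1 <= d)%nat -> 0 < init_sq lam I d)
  (HC : 0 < C) (Hp : 0 < p) (Hq : 0 <= q)
  (HPT : poly_tractable_with lam I C p q) :
  (forall tau, p / 2 < tau -> exists l, infinite_sum (fun m => rpow0 (lam m) tau) l)
  /\ (forall cs : list R, (forall n : nat, (1 <= n)%nat -> 0 < poly_eval cs (INR n)) ->
        Un_cv (fun d => init_sq lam I d * poly_eval cs (INR d)) 0)
  /\ (exists K : R, exists d0 : nat, forall d, (d0 <= d)%nat ->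
        INR (b_card I d) <= K * ln (INR d))
  /\ Un_cv (fun d => INR (a_card I d) / INR d) 1
  /\ (strongly_poly_tractable lam I -> exists K : nat, forall d, (b_card I d <= K)%nat).
Proof.
  assert (lam21 : lam 1%nat <= lam 0%nat) by apply lam_noninc.
  assert (lam1_pos : 0 < lam 0%nat) by lra.
  destruct (b_card_log_bound lam I C p q lam_nonneg lam2_pos lam21 init_pos HC HPT)
    as (c0 & c1 & Hc1 & Hb).
  assert (HK : 0 <= c1 * q) by (apply Rmult_le_pos; auto).
  split; [|split; [|split; [|split]]].
  - exact (eigenvalues_summable lam I C p q lam_nonneg lam_noninc lam1_pos I1 HC Hp HPT).
  - exact (init_superpoly_decay lam I c0 (c1 * q) HK Hb lam_nonneg lam_noninc lam_to0 init_pos).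
  - exact (O_ln_of_affine_ln_bound (fun d => INR (b_card I d)) c0 (c1 * q) HK Hb).
  - exact (a_card_ratio_cv I c0 (c1 * q) HK Hb).
  - exact (b_card_bounded lam I lam_nonneg lam2_pos lam21 init_pos).
Qed.
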